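(* Let $E$ be a Banach lattice such that the lattice operations in $E'$ are weak* sequentially continuous, i.e. $x_n' \to 0$ weak* in $E'$ implies $|x_n'| \to 0$ weak* in $E'$. Let $A \subset E$. Then $|A| = \{|x| : x \in A\}$ is a Grothendieck set if and only if the solid hull $\mathrm{sol}(A)$ is a Grothendieck set.
   Context: A subset $A$ of a Banach space $X$ is a Grothendieck set if $T(A)$ is relatively weakly compact in $c_0$ for every bounded linear operator $T: X \to c_0$. The solid hull is $\mathrm{sol}(A) = \{x \in E : |x| \le |y| \text{ for some } y \in A\}$. *)

From HB Require Import structures.
From mathcomp Require Import all_boot all_order all_algebra.
From mathcomp Require Import all_classical all_reals all_analysis.

Set Implicit Arguments.
Unset Strict Implicit.
Unset Printing Implicit Defensive.

Import Order.TTheory GRing.Theory Num.Theory.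
Import numFieldNormedType.Exports.

Local Open Scope classical_set_scope.
Local Open Scope ring_scope.

Definition lat_abs {R : realType} {E : completeNormedModType R}
  (join : E -> E -> E) (x : E) : E := join x (- x).

Record banach_lattice {R : realType} {E : completeNormedModType R}
    (le : E -> E -> Prop) (join : E -> E -> E) : Prop := BanachLattice {
  bl_refl : forall x, le x x;
  bl_antisym : forall x y, le x y -> le y x -> x = y;
  bl_trans : forall x y z, le x y -> le y z -> le x z;
  bl_join_ubl : forall x y, le x (join x y);
  bl_join_ubr : forall x y, le y (join x y);
  bl_join_least : forall x y z, le x z -> le y z -> le (join x y) z;
  bl_add : forall x y z, le x y -> le (x + z) (y + z);
  bl_scale : forall (a : R) x, 0 <= a -> le 0 x -> le 0 (a *: x);
  bl_norm : forall x y, le (lat_abs join x) (lat_abs join y) -> `|x| <= `|y|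
}.

Definition solid_hull {R : realType} {E : completeNormedModType R}
  (le : E -> E -> Prop) (join : E -> E -> E) (A : set E) : set E :=
  [set x | exists2 y, A y & le (lat_abs join x) (lat_abs join y)].

(* The norm dual E' and its lattice modulus (Riesz--Kantorovich formula).   *)

Definition dual_elem {R : realType} {E : completeNormedModType R}
  (f : E -> R) : Prop :=
  [/\ forall x y, f (x + y) = f x + f y,
      forall (a : R) x, f (a *: x) = a * f x &
      continuous f].

Definition dual_abs_pos {R : realType} {E : completeNormedModType R}
  (le : E -> E -> Prop) (join : E -> E -> E) (f : E -> R) (x : E) : R :=
  sup [set f y | y in [set y | le (lat_abs join y) x]].

Definition dual_abs {R : realType} {E : completeNormedModType R}
  (le : E -> E -> Prop) (join : E -> E -> E) (f : E -> R) (x : E) : R :=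
  dual_abs_pos le join f (join x 0) - dual_abs_pos le join f (join (- x) 0).

Definition dual_lattice_weakstar_seq_cont {R : realType}
  {E : completeNormedModType R} (le : E -> E -> Prop) (join : E -> E -> E)
  : Prop :=
  forall f : nat -> E -> R, (forall n, dual_elem (f n)) ->
    (forall x, f n x @[n --> \oo] --> 0) ->
    (forall x, dual_abs le join (f n) x @[n --> \oo] --> 0).

Record c0 (R : realType) := C0 {
  c0val :> nat -> R;
  c0valP : `[< c0val n @[n --> \oo] --> 0 >]
}.

HB.instance Definition _ (R : realType) := [isSub for @c0val R].
HB.instance Definition _ (R : realType) := [Choice of c0 R by <:].

Definition c0norm {R : realType} (u : c0 R) : R :=
  sup [set `|c0val u n| | n in [set: nat]].

Definition c0_dual_elem {R : realType} (phi : c0 R -> R) : Prop :=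
  [/\ forall u v : c0 R, forall a : R, forall w : c0 R,
        (forall n, c0val w n = a * c0val u n + c0val v n) ->
        phi w = a * phi u + phi v &
      exists C : R, forall u, `|phi u| <= C * c0norm u].

Definition c0_dual (R : realType) := {phi : c0 R -> R | c0_dual_elem phi}.

Definition c0_weak (R : realType) :=
  sup_topology (fun phi : c0_dual R =>
    Topological.class (initial_topology (proj1_sig phi))).

Definition rel_weakly_compact_c0 {R : realType} (S : set (c0 R)) : Prop :=
  compact (closure (S : set (c0_weak R))).

Definition bounded_op_c0 {R : realType} {E : completeNormedModType R}
  (T : E -> c0 R) : Prop :=
  [/\ forall x y n, c0val (T (x + y)) n = c0val (T x) n + c0val (T y) n,
      forall (a : R) x n, c0val (T (a *: x)) n = a * c0val (T x) n &
      exists C : R, forall x, c0norm (T x) <= C * `|x| ].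

Definition grothendieck_set {R : realType} {E : completeNormedModType R}
  (A : set E) : Prop :=
  forall T : E -> c0 R, bounded_op_c0 T -> rel_weakly_compact_c0 (T @` A).

From HB Require Import structures.
From mathcomp Require Import all_boot all_order all_algebra.
From mathcomp Require Import all_classical all_reals all_analysis.
From mathcomp Require Import lra.
Import Order.TTheory GRing.Theory Num.Theory.
Import numFieldNormedType.Exports.
Local Open Scope classical_set_scope.
Local Open Scope ring_scope.
Set Implicit Arguments.
Unset Strict Implicit.
Unset Printing Implicit Defensive.

(* Since |A| is contained in sol(A), only one implication needs work.  A bounded
   operator T : E -> c0 is a weak*-null sequence of functionals f_n in E'; by
   hypothesis their moduli |f_n|, given by the Riesz-Kantorovich formula, are
   weak*-null too, so |T| x := (|f_n| x)_n is again a bounded operator into c0, and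
   |T x| <= |T| |y| coordinatewise whenever |x| <= |y|.  Hence T(sol A) lies in the
   solid hull, in c0, of the weakly compact closure of |T|(|A|).  Such solid hulls
   are weakly compact: along an ultrafilter the coordinates converge under the
   domination by the limit of the majorants, and the tails of a functional on c0
   are controlled uniformly on sequences dominated by a convergent family. *)

(** * Vector lattices *)

Section vector_lattice.
Variables (R : realType) (E : completeNormedModType R).
Variables (le : E -> E -> Prop) (join : E -> E -> E).
Hypothesis HBL : banach_lattice le join.
Local Notation "x <=L y" := (le x y) (at level 70).
Local Notation abs := (lat_abs join).
Implicit Types x y z : E.

Lemma lle_refl x : x <=L x. Proof. exact: (bl_refl HBL). Qed.
Lemma lle_trans x y z : x <=L y -> y <=L z -> x <=L z.
Proof. exact: (bl_trans HBL). Qed.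
Lemma lle_anti x y : x <=L y -> y <=L x -> x = y.
Proof. exact: (bl_antisym HBL). Qed.
Lemma lle_joinl x y : x <=L join x y. Proof. exact: (bl_join_ubl HBL). Qed.
Lemma lle_joinr x y : y <=L join x y. Proof. exact: (bl_join_ubr HBL). Qed.
Lemma lle_join x y z : x <=L z -> y <=L z -> join x y <=L z.
Proof. exact: (bl_join_least HBL). Qed.

Lemma joinC x y : join x y = join y x.
Proof. by apply: lle_anti; apply: lle_join; first [exact: lle_joinl | exact: lle_joinr]. Qed.

Lemma lleD2r x y z : x <=L y -> x + z <=L y + z. Proof. exact: (bl_add HBL). Qed.

Lemma lleD x y z t : x <=L y -> z <=L t -> x + z <=L y + t.
Proof.
move=> xy zt; apply: lle_trans (lleD2r z xy) _.
by rewrite ![y + _]addrC; exact: lleD2r.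
Qed.

Lemma lleN2 x y : x <=L y -> - y <=L - x.
Proof.
move=> /(lleD2r (- x - y)).
by rewrite addrA subrr add0r addrCA subrr addr0.
Qed.

Lemma lle_subr_ge0 x y : 0 <=L y - x <-> x <=L y.
Proof.
split => [/(lleD2r x)|/(lleD2r (- x))]; first by rewrite add0r subrK.
by rewrite subrr.
Qed.

Lemma lleZ2l (a : R) x y : 0 <= a -> x <=L y -> a *: x <=L a *: y.
Proof.
move=> a_ge0 /lle_subr_ge0 xy; apply/lle_subr_ge0.
by rewrite -scalerBr; exact: (bl_scale HBL).
Qed.

Lemma joinDr x y z : join (x + z) (y + z) = join x y + z.
Proof.
apply: lle_anti.
  by apply: lle_join; apply: lleD2r; [exact: lle_joinl | exact: lle_joinr].
rewrite -[join (x + z) _](subrK z); apply: lleD2r.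
by apply: lle_join; rewrite -[X in X <=L _](addrK z);
  apply: lleD2r; [exact: lle_joinl | exact: lle_joinr].
Qed.

Lemma lle_subl_addr x y z : x - y <=L z <-> x <=L z + y.
Proof.
split => [/(lleD2r y)|/(lleD2r (- y))]; first by rewrite subrK.
by rewrite addrK.
Qed.

Lemma lle_lat_abs x : x <=L abs x. Proof. exact: lle_joinl. Qed.
Lemma lleN_lat_abs x : - x <=L abs x. Proof. exact: lle_joinr. Qed.

Lemma lat_abs_ge0 x : 0 <=L abs x.
Proof.
have : 0 <=L 2^-1 *: (abs x + abs x).
  rewrite -(scaler0 _ 2^-1) -(subrr x); apply: lleZ2l; first by rewrite invr_ge0.
  exact: lleD (lle_lat_abs x) (lleN_lat_abs x).
have half : (2^-1 : R) + 2^-1 = 1 by lra.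
by rewrite scalerDr -scalerDl half scale1r.
Qed.

Lemma ge0_lat_abs x : 0 <=L x -> abs x = x.
Proof.
move=> x_ge0; apply: lle_anti; last exact: lle_lat_abs.
apply: lle_join; first exact: lle_refl.
by apply: lle_trans (lleN2 x_ge0) _; rewrite oppr0.
Qed.

Lemma lat_abs_id x : abs (abs x) = abs x.
Proof. exact: ge0_lat_abs (lat_abs_ge0 x). Qed.

Lemma lat_abs0 : abs 0 = 0.
Proof. exact: ge0_lat_abs (lle_refl 0). Qed.

Lemma lat_absN x : abs (- x) = abs x.
Proof. by rewrite /lat_abs opprK joinC. Qed.

Lemma lle_lat_absD x y : abs (x + y) <=L abs x + abs y.
Proof.
apply: lle_join; first exact: lleD (lle_lat_abs x) (lle_lat_abs y).
by rewrite opprD; exact: lleD (lleN_lat_abs x) (lleN_lat_abs y).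
Qed.

Lemma lat_absZ (a : R) x : 0 <= a -> abs (a *: x) = a *: abs x.
Proof.
rewrite le_eqVlt => /predU1P[<-|a_gt0]; first by rewrite !scale0r lat_abs0.
have lle_abs_scale b y : 0 <= b -> abs (b *: y) <=L b *: abs y.
  move=> b_ge0; apply: lle_join; first exact: lleZ2l (lle_lat_abs y).
  by rewrite -scalerN; exact: lleZ2l (lleN_lat_abs y).
apply: lle_anti; first exact: lle_abs_scale (ltW a_gt0).
have := lleZ2l (ltW a_gt0) (lle_abs_scale a^-1 (a *: x) _).
rewrite !scalerA mulfV ?mulVf ?gt_eqF // !scale1r; apply.
by rewrite invr_ge0 ltW.
Qed.

Definition lat_meet x y := - join (- x) (- y).

Lemma lle_meetl x y : lat_meet x y <=L x.
Proof. by rewrite -[X in _ <=L X]opprK; apply: lleN2; exact: lle_joinl. Qed.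

Lemma lle_meetr x y : lat_meet x y <=L y.
Proof. by rewrite -[X in _ <=L X]opprK; apply: lleN2; exact: lle_joinr. Qed.

Lemma lle_meet x y z : z <=L x -> z <=L y -> z <=L lat_meet x y.
Proof. by move=> zx zy; rewrite -(opprK z); apply: lleN2; apply: lle_join; apply: lleN2. Qed.

(* The witness is the truncation of [y] to the order interval [-x1, x1]. *)
Lemma riesz_decomposition y x1 x2 : 0 <=L x1 -> 0 <=L x2 -> abs y <=L x1 + x2 ->
  exists2 y1, abs y1 <=L x1 & abs (y - y1) <=L x2.
Proof.
move=> x1_ge0 x2_ge0 y_le.
have y_le' : y <=L x1 + x2 := lle_trans (lle_lat_abs y) y_le.
have Ny_le : - y <=L x1 + x2 := lle_trans (lleN_lat_abs y) y_le.
have le_addr u v : 0 <=L v -> u <=L u + v.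
  by move=> /(lleD2r u); rewrite add0r addrC.
have Nx1_le : - x1 <=L x1 by apply: lle_trans (lleN2 x1_ge0) _; rewrite oppr0.
exists (join (lat_meet y x1) (- x1)).
  apply: lle_join; first by apply: lle_join; [exact: lle_meetr | exact: Nx1_le].
  by rewrite -[X in _ <=L X]opprK; apply: lleN2; exact: lle_joinr.
apply: lle_join.
  apply/lle_subl_addr; rewrite addrC; apply/lle_subl_addr.
  apply: lle_trans (lle_joinl _ _); apply: lle_meet.
    by apply/lle_subl_addr; exact: le_addr.
  by apply/lle_subl_addr.
rewrite opprB; apply/lle_subl_addr; rewrite addrC; apply: lle_join.
  exact: lle_trans (lle_meetl _ _) (le_addr _ _ x2_ge0).
by apply/lle_subl_addr; rewrite -opprD -[X in _ <=L X]opprK; exact: lleN2.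
Qed.

Definition pos_part x := join x 0.
Definition neg_part x := join (- x) 0.

Lemma pos_part_ge0 x : 0 <=L pos_part x. Proof. exact: lle_joinr. Qed.
Lemma neg_part_ge0 x : 0 <=L neg_part x. Proof. exact: lle_joinr. Qed.

Lemma pos_partBneg_part x : pos_part x - neg_part x = x.
Proof.
have -> : neg_part x = pos_part x - x.
  by rewrite /neg_part /pos_part -joinDr subrr add0r joinC.
by rewrite opprB addrC subrK.
Qed.

Lemma pos_part_le_abs x : pos_part x <=L abs x.
Proof. by apply: lle_join; [exact: lle_lat_abs | exact: lat_abs_ge0]. Qed.

Lemma neg_part_le_abs x : neg_part x <=L abs x.
Proof. by apply: lle_join; [exact: lleN_lat_abs | exact: lat_abs_ge0]. Qed.

Lemma norm_pos_part x : `|pos_part x| <= `|x|.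
Proof.
by apply: (bl_norm HBL); rewrite (ge0_lat_abs (pos_part_ge0 x)); exact: pos_part_le_abs.
Qed.

Lemma norm_neg_part x : `|neg_part x| <= `|x|.
Proof.
by apply: (bl_norm HBL); rewrite (ge0_lat_abs (neg_part_ge0 x)); exact: neg_part_le_abs.
Qed.

End vector_lattice.

(** * The modulus of a continuous functional *)

Section dual_modulus.
Variables (R : realType) (E : completeNormedModType R).
Variables (le : E -> E -> Prop) (join : E -> E -> E).
Hypothesis HBL : banach_lattice le join.
Local Notation "x <=L y" := (le x y) (at level 70).
Local Notation abs := (lat_abs join).
Variable f : E -> R.
Hypothesis fD : forall x y, f (x + y) = f x + f y.
Hypothesis fZ : forall (a : R) x, f (a *: x) = a * f x.
Variable K : R.
Hypothesis K_ge0 : 0 <= K.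
Hypothesis f_le : forall x, `|f x| <= K * `|x|.
Local Notation P := (dual_abs_pos le join f).
Local Notation "|f|" := (dual_abs le join f).
Implicit Types x y : E.

Lemma dual_abs_pos_ub x y : abs y <=L x -> f y <= P x.
Proof.
move=> y_le; apply: ub_le_sup; last by exists y.
exists (K * `|x|) => _ [z z_le <-]; apply: le_trans (ler_norm _) _.
apply: le_trans (f_le z) _; apply: ler_wpM2l => //; apply: (bl_norm HBL).
by rewrite (ge0_lat_abs HBL (lle_trans HBL (lat_abs_ge0 HBL z) z_le)).
Qed.

Lemma dual_abs_pos_le x M : 0 <=L x -> (forall y, abs y <=L x -> f y <= M) -> P x <= M.
Proof.
move=> x_ge0 fM; apply: ge_sup; last by move=> _ [y y_le <-]; exact: fM.
by exists (f 0), 0; rewrite //= (lat_abs0 HBL).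
Qed.

Lemma dual_abs_pos_ge0 x : 0 <=L x -> 0 <= P x.
Proof.
move=> x_ge0; have f0 : f 0 = 0 by rewrite -(scale0r 0) fZ mul0r.
by rewrite -f0; apply: dual_abs_pos_ub; rewrite (lat_abs0 HBL).
Qed.

Lemma dual_abs_pos_le_norm x : 0 <=L x -> P x <= K * `|x|.
Proof.
move=> x_ge0; apply: dual_abs_pos_le => // y y_le.
apply: le_trans (ler_norm _) _; apply: le_trans (f_le y) _; apply: ler_wpM2l => //.
by apply: (bl_norm HBL); rewrite (ge0_lat_abs HBL x_ge0).
Qed.

(* Subadditivity is where the Riesz decomposition property is needed. *)
Lemma dual_abs_posD x1 x2 : 0 <=L x1 -> 0 <=L x2 -> P (x1 + x2) = P x1 + P x2.
Proof.
move=> x1_ge0 x2_ge0.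
have x12_ge0 : 0 <=L x1 + x2 by rewrite -(addr0 0); exact: (lleD HBL).
apply/eqP; rewrite eq_le; apply/andP; split.
  apply: dual_abs_pos_le => // y /(riesz_decomposition HBL x1_ge0 x2_ge0) [y1 y1_le y2_le].
  by rewrite -(subrKC y1 y) fD; apply: lerD; apply: dual_abs_pos_ub.
rewrite -lerBrDr; apply: dual_abs_pos_le => // y1 y1_le.
rewrite lerBrDr addrC -lerBrDr; apply: dual_abs_pos_le => // y2 y2_le.
rewrite lerBrDr addrC -fD; apply: dual_abs_pos_ub.
exact: (lle_trans HBL (lle_lat_absD HBL y1 y2) (lleD HBL y1_le y2_le)).
Qed.

Lemma dual_abs_pos0 : P 0 = 0.
Proof.
have := dual_abs_posD (lle_refl HBL 0) (lle_refl HBL 0).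
by rewrite addr0 => /eqP; rewrite -subr_eq0 opprD addNKr oppr_eq0 => /eqP.
Qed.

Lemma dual_abs_posZ (a : R) x : 0 <= a -> 0 <=L x -> P (a *: x) = a * P x.
Proof.
rewrite le_eqVlt => /predU1P[<- _|a_gt0 x_ge0]; first by rewrite scale0r dual_abs_pos0 mul0r.
have ax_ge0 : 0 <=L a *: x by exact: (bl_scale HBL (ltW a_gt0)).
have a_neq0 : a != 0 by rewrite gt_eqF.
apply/eqP; rewrite eq_le; apply/andP; split.
  apply: dual_abs_pos_le => // y y_le.
  rewrite -[y](scalerKV a_neq0) fZ ler_pM2l //; apply: dual_abs_pos_ub.
  rewrite (lat_absZ HBL) ?invr_ge0 ?(ltW a_gt0) //.
  by rewrite -[x](scalerK a_neq0); apply: (lleZ2l HBL); rewrite ?invr_ge0 ?ltW.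
rewrite mulrC -ler_pdivlMr //; apply: dual_abs_pos_le => // y y_le.
rewrite ler_pdivlMr // mulrC -fZ; apply: dual_abs_pos_ub.
by rewrite (lat_absZ HBL) ?(ltW a_gt0) //; exact: (lleZ2l HBL (ltW a_gt0)).
Qed.

Lemma dual_absE x : |f| x = P (pos_part join x) - P (neg_part join x).
Proof. by []. Qed.

Lemma dual_abs_sub p q x : 0 <=L p -> 0 <=L q -> x = p - q -> |f| x = P p - P q.
Proof.
move=> p_ge0 q_ge0 ->; set d := p - q.
have e : pos_part join d + q = p + neg_part join d.
  by rewrite -[pos_part join d](subrK (neg_part join d)) (pos_partBneg_part HBL) addrAC subrK.
have pd_ge0 := pos_part_ge0 HBL d; have nd_ge0 := neg_part_ge0 HBL d.
by move: (congr1 P e); rewrite !dual_abs_posD // dual_absE; lra.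
Qed.

Lemma dual_absD x y : |f| (x + y) = |f| x + |f| y.
Proof.
have pos_ge0 := pos_part_ge0 HBL; have neg_ge0 := neg_part_ge0 HBL.
rewrite (@dual_abs_sub (pos_part join x + pos_part join y) (neg_part join x + neg_part join y));
  first by rewrite !dual_abs_posD // !dual_absE; lra.
- by rewrite -(addr0 0); exact: (lleD HBL).
- by rewrite -(addr0 0); exact: (lleD HBL).
- by rewrite opprD addrACA !(pos_partBneg_part HBL).
Qed.

Lemma dual_absZ (a : R) x : |f| (a *: x) = a * |f| x.
Proof.
have pos_ge0 := pos_part_ge0 HBL; have neg_ge0 := neg_part_ge0 HBL.
have [a_ge0|a_lt0] := leP 0 a.
  rewrite (@dual_abs_sub (a *: pos_part join x) (a *: neg_part join x)).
  - by rewrite !dual_abs_posZ // dual_absE mulrBr.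
  - exact: (bl_scale HBL).
  - exact: (bl_scale HBL).
  - by rewrite -scalerBr (pos_partBneg_part HBL).
have Na_ge0 : 0 <= - a by rewrite oppr_ge0 ltW.
rewrite (@dual_abs_sub ((- a) *: neg_part join x) ((- a) *: pos_part join x)).
- by rewrite !dual_abs_posZ // dual_absE; lra.
- exact: (bl_scale HBL).
- exact: (bl_scale HBL).
- by rewrite -scalerBr -opprB scalerN scaleNr opprK (pos_partBneg_part HBL).
Qed.

Lemma dual_abs_le_norm x : `|(|f| x)| <= K * `|x|.
Proof.
have bound p : 0 <=L p -> `|p| <= `|x| -> 0 <= P p <= K * `|x|.
  move=> p_ge0 px; rewrite dual_abs_pos_ge0 //=.
  exact: le_trans (dual_abs_pos_le_norm p_ge0) (ler_wpM2l K_ge0 px).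
have /andP[? ?] := bound _ (pos_part_ge0 HBL x) (norm_pos_part HBL x).
have /andP[? ?] := bound _ (neg_part_ge0 HBL x) (norm_neg_part HBL x).
by rewrite dual_absE ler_norml; apply/andP; split; lra.
Qed.

Lemma norm_le_dual_abs x y : abs x <=L abs y -> `|f x| <= |f| (abs y).
Proof.
move=> x_le.
rewrite (dual_abs_sub (lat_abs_ge0 HBL y) (lle_refl HBL 0)) ?subr0 // dual_abs_pos0 subr0.
rewrite ler_norml -lerNl -[- f x]mulN1r -fZ scaleN1r.
by rewrite !dual_abs_pos_ub // (lat_absN HBL).
Qed.

End dual_modulus.

(** * The space c0 and its weak topology *)

Section c0_space.
Variable R : realType.
Implicit Types (u v : c0 R) (w : nat -> R).

Lemma c0_cvg u : u n @[n --> \oo] --> 0.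
Proof. exact/asboolP/c0valP. Qed.

Lemma c0_eq u v : (forall n, u n = v n) -> u = v.
Proof. by move=> uv; apply: val_inj; apply/funext. Qed.

Lemma c0norm_ge u n : `|u n| <= c0norm u.
Proof.
have /cvg_seq_bounded[M [_ uM]] : cvgn (c0val u) by apply/cvg_ex; exists 0; exact: c0_cvg.
apply: ub_le_sup; last by exists n.
by exists (M + 1) => _ [k _ <-]; apply: (uM (M + 1)); rewrite ?ltrDl.
Qed.

Lemma c0norm_le u M : (forall n, `|u n| <= M) -> c0norm u <= M.
Proof. by move=> uM; apply: ge_sup; [exists `|u 0|, 0%N | move=> _ [k _ <-]]. Qed.

Lemma c0norm_ge0 u : 0 <= c0norm u.
Proof. exact: le_trans (normr_ge0 _) (c0norm_ge u 0). Qed.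

Lemma dominated_cvg0 w (a : nat -> R) : (forall n, `|w n| <= `|a n|) ->
  a n @[n --> \oo] --> 0 -> w n @[n --> \oo] --> 0.
Proof.
move=> wa /cvgr0Pnorm_lt a0; apply/cvgr0Pnorm_lt => e e_gt0.
by apply: filterS (a0 e e_gt0) => n; apply: le_lt_trans.
Qed.

Definition mkc0 w (w0 : w n @[n --> \oo] --> 0) : c0 R := C0 (asboolT w0).

Lemma c0_unit_cvg k : (n == k)%:R @[n --> \oo] --> (0 : R).
Proof. by apply: cvg_near_cst; exists k.+1 => // n /= /gtn_eqF ->. Qed.

Definition c0_unit k := mkc0 (c0_unit_cvg k).

Lemma c0_lincomb_cvg (a : R) u v : (a * u n + v n) @[n --> \oo] --> 0.
Proof.
have -> : (0 : R) = a * 0 + 0 by rewrite mulr0 addr0.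
by apply: cvgD; [apply: cvgMr|]; exact: c0_cvg.
Qed.

Definition c0_lincomb (a : R) u v := mkc0 (c0_lincomb_cvg a u v).

Lemma c0_tail_cvg N u : (if (n < N)%N then 0 else u n) @[n --> \oo] --> 0.
Proof. by apply: dominated_cvg0 (c0_cvg u) => n; case: ifP; rewrite ?normr0. Qed.

Definition c0_tail N u := mkc0 (c0_tail_cvg N u).

Lemma c0_sign_cvg (s : nat -> R) u : (if 0 <= s n then u n else - u n) @[n --> \oo] --> 0.
Proof. by apply: dominated_cvg0 (c0_cvg u) => n; case: ifP; rewrite ?normrN. Qed.

Definition c0_sign (s : nat -> R) u := mkc0 (c0_sign_cvg s u).

Lemma c0_dual_coord k : c0_dual_elem (fun u : c0 R => u k).
Proof. by split=> [u v a w ->|]; last by exists 1 => u; rewrite mul1r c0norm_ge. Qed.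

Definition c0_coord k : c0_dual R := exist _ _ (c0_dual_coord k).

Lemma cvg_c0_weakP (F : set_system (c0_weak R)) (h : c0 R) : Filter F ->
  F --> (h : c0_weak R) <-> forall phi : c0_dual R, sval phi @ F --> sval phi h.
Proof.
move=> FF; rewrite cvg_sup; split=> Fh phi.
  by move=> A /= Ah; apply: (Fh phi); exact: (@initial_continuous _ _ (sval phi) h).
move=> A /=; rewrite (@nbhsE (initial_topology (sval phi))) => -[B [[C oC <-] Bh] BA].
by apply: filterS BA _; apply: Fh; exact: open_nbhs_nbhs.
Qed.

Lemma c0_dual_continuous (phi : c0_dual R) : continuous (sval phi : c0_weak R -> R).
Proof. by move=> h; apply: (@cvg_c0_weakP (nbhs (h : c0_weak R)) h _).1. Qed.

Lemma c0_weak_hausdorff : hausdorff_space (c0_weak R).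
Proof.
move=> p q pq; apply: c0_eq => k; apply/eqP; rewrite -subr_eq0 -normr_le0.
apply/ler_addgt0Pr => e e_gt0; rewrite add0r.
have e2_gt0 : 0 < e / 2 by rewrite divr_gt0.
have near_k (r : c0_weak R) : \forall t \near r, `|(r : c0 R) k - (t : c0 R) k| < e / 2.
  exact: (cvgr_dist_lt _ _ (c0_dual_continuous (phi := c0_coord k) (x := r)) _ e2_gt0).
have [t [pt qt]] := pq _ _ (near_k p) (near_k q).
rewrite -(subrKA (t k)) (splitr e); apply: le_trans (ler_normD _ _) _.
by rewrite distrC in qt; apply: ltW; apply: ltrD.
Qed.

End c0_space.

Section c0_functional.
Variable R : realType.
Variable phi : c0 R -> R.
Hypothesis phiP : c0_dual_elem phi.
Implicit Types (u v w h g : c0 R).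

Lemma c0_dual_lin (a : R) u v w : (forall n, w n = a * u n + v n) ->
  phi w = a * phi u + phi v.
Proof. by case: phiP => lin _; exact: lin. Qed.

Lemma c0_dual_bound : exists2 C, 0 <= C & forall u, `|phi u| <= C * c0norm u.
Proof.
case: phiP => _ [C phiC]; exists (Num.max C 0) => [|u]; first by rewrite le_max lexx orbT.
by apply: le_trans (phiC u) _; apply: ler_wpM2r; rewrite ?c0norm_ge0 ?le_max ?lexx.
Qed.

Definition c0_coef k := phi (c0_unit R k).

Lemma c0_dual_expand N u :
  phi u = \sum_(k < N) u k * c0_coef k + phi (c0_tail N u).
Proof.
elim: N => [|N ->]; first by rewrite big_ord0 add0r; congr phi; apply: c0_eq.
rewrite big_ord_recr /= -addrA; congr (_ + _).
apply: c0_dual_lin => n /=; case: (ltngtP n N) => [n_lt|n_gt|->].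
- by rewrite ltnS (ltnW n_lt) mulr0 addr0.
- by rewrite ltnS leqNgt n_gt mulr0 add0r.
- by rewrite ltnS leqnn mulr1 addr0.
Qed.

Lemma c0_dual_tail_cvg u : phi (c0_tail N u) @[N --> \oo] --> 0.
Proof.
have [C C_ge0 phiC] := c0_dual_bound.
apply/cvgr0Pnorm_le => e e_gt0.
have e'_gt0 : 0 < e / (C + 1) by rewrite divr_gt0 // ltr_wpDl.
have [M _ uM] := cvgr0_norm_le _ (c0_cvg u) _ e'_gt0.
exists M => // N /= MN; apply: le_trans (phiC _) _.
apply: le_trans (ler_wpM2l C_ge0 (c0norm_le (M := e / (C + 1)) _)) _.
  move=> n /=; case: ltnP => [_|Nn]; first by rewrite normr0 ltW.
  by apply: uM; exact: leq_trans MN Nn.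
by rewrite mulrA ler_pdivrMr ?ltr_wpDl //; nra.
Qed.

Lemma c0_dual_le (a : R) u v :
  (forall n, a * (c0_coef n * u n) <= c0_coef n * v n) -> a * phi u <= phi v.
Proof.
move=> uv; set w := c0_lincomb (- a) u v.
rewrite -subr_ge0 addrC -mulNr -(c0_dual_lin (w := w)) //.
have tail_le N : phi (c0_tail N w) <= phi w.
  rewrite (c0_dual_expand N w) lerDr; apply: sumr_ge0 => k _ /=.
  by have := uv k; nra.
by apply: (ler_cvg_to (c0_dual_tail_cvg w) (cvg_cst (phi w))); apply: nearW.
Qed.

(* [sum_(k >= N) |phi e_k| g_k], written without series as [phi] applied to the
   tail of [g] carrying the signs of the coefficients of [phi]. *)
Definition c0_tail_majorant N g := phi (c0_tail N (c0_sign c0_coef g)).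

Lemma c0_tail_majorant_dual N : c0_dual_elem (c0_tail_majorant N).
Proof.
have [C C_ge0 phiC] := c0_dual_bound.
split=> [u v a w wE|].
  apply: c0_dual_lin => n /=; case: ltnP => _; first by rewrite mulr0 addr0.
  by case: ifP; rewrite wE // opprD mulrN.
exists C => g; apply: le_trans (phiC _) _; apply: ler_wpM2l => //.
apply: c0norm_le => n /=; case: ltnP => _; first by rewrite normr0 c0norm_ge0.
by case: ifP; rewrite ?normrN c0norm_ge.
Qed.

Lemma c0_tail_majorant_cvg g : c0_tail_majorant N g @[N --> \oo] --> 0.
Proof. exact: c0_dual_tail_cvg. Qed.

Lemma norm_c0_tail_le N h g : (forall n, `|h n| <= g n) ->
  `|phi (c0_tail N h)| <= c0_tail_majorant N g.
Proof.
move=> hg; have maj a : `|a| <= 1 -> a * phi (c0_tail N h) <= c0_tail_majorant N g.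
  move=> a_le1; apply: c0_dual_le => n /=; case: ltnP => _; rewrite ?mulr0 //.
  have : `|a * h n| <= g n by rewrite normrM; apply: le_trans (hg n); rewrite ler_piMl.
  by rewrite ler_norml => /andP[? ?]; case: (leP 0 (c0_coef n)) => ?; nra.
rewrite ler_norml -lerNl -mulN1r maj ?normrN ?normr1 //.
by rewrite -[X in X <= _]mul1r maj ?normr1.
Qed.

End c0_functional.

(** * Solid hulls of weakly compact subsets of c0 *)

Lemma ultra_cluster_cvg (T : Type) (U : topologicalType) (F : set_system T)
    (f : T -> U) (p : U) :
  UltraFilter F -> cluster (f @ F) p -> f @ F --> p.
Proof.
move=> F_ultra fFp A Ap; have [//|FnA] := in_ultra_setVsetC (f @^-1` A) F_ultra.
by have [x [] //] := fFp (~` A) A FnA Ap.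
Qed.

Lemma ultra_cvg_bounded (T : Type) (R : realType) (F : set_system T) (f : T -> R) (M : R) :
  UltraFilter F -> (\forall t \near F, `|f t| <= M) -> exists c : R, f @ F --> c.
Proof.
move=> F_ultra fM; have F_proper := @ultra_proper _ _ F_ultra.
have fFM : (f @ F) `[- M, M]%classic by apply: filterS fM => t; rewrite /= in_itv /= -ler_norml.
have [c [_ fFc]] := @segment_compact R (- M) M (f @ F) _ fFM.
by exists c; exact: ultra_cluster_cvg.
Qed.

Definition c0_solid_hull (R : realType) (K : set (c0 R)) : set (c0 R) :=
  [set h | exists2 g, K g & forall n, `|h n| <= g n].

Section c0_weak_compactness.
Variable R : realType.

Lemma weak_cvg_dominated (F : set_system (c0_weak R)) (G : c0_weak R -> c0_weak R)
    (gs hs : c0 R) : ProperFilter F ->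
  G @ F --> (gs : c0_weak R) ->
  (\forall h \near F, forall n, `|(h : c0 R) n| <= (G h : c0 R) n) ->
  (forall k, (fun h : c0_weak R => (h : c0 R) k) @ F --> hs k) ->
  F --> (hs : c0_weak R).
Proof.
(* [phi h - phi hs] is a finite sum converging to 0 plus two tails; the tail of [h]
   is bounded by the majorant of [G h], whose limit is the small majorant of [gs]. *)
move=> F_proper GF F_dom F_coord; apply/cvg_c0_weakP => -[phi phiP] /=.
apply/cvgrPdist_lt => e e_gt0; have e4_gt0 : 0 < e / 4 by rewrite divr_gt0.
have [M1 _ tail_hs] := cvgr0_norm_lt _ (c0_dual_tail_cvg phiP hs) _ e4_gt0.
have [M2 _ maj_gs] := cvgr0_norm_lt _ (c0_tail_majorant_cvg phiP gs) _ e4_gt0.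
pose N := maxn M1 M2.
have /= tail_hsN := tail_hs N (leq_maxl _ _).
have /= maj_gsN := maj_gs N (leq_maxr _ _).
have maj_cvg : c0_tail_majorant phi N (G h) @[h --> F] --> c0_tail_majorant phi N gs.
  apply: (cvg_comp _ _ GF).
  exact: (c0_dual_continuous (phi := exist _ _ (c0_tail_majorant_dual phiP N)) (x := gs)).
have sum_cvg : \sum_(k < N) (h : c0 R) k * c0_coef phi k @[h --> F] -->
    \sum_(k < N) hs k * c0_coef phi k.
  by apply: (cvg_big add_continuous) => // k _; apply: cvgMl.
have F_maj := cvgr_dist_lt (FF := F_proper) _ _ maj_cvg _ e4_gt0.
have F_sum := cvgr_dist_lt (FF := F_proper) _ _ sum_cvg _ e4_gt0.
move: F_dom F_sum F_maj; apply: filter_app3; apply: nearW => h h_dom h_sum h_maj.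
have := norm_c0_tail_le phiP N h_dom; move: h_sum h_maj tail_hsN maj_gsN.
rewrite (c0_dual_expand phiP N hs) (c0_dual_expand phiP N h) !ltr_norml ler_norml.
by do 5 move=> /andP[? ?]; apply/andP; split; lra.
Qed.

Lemma compact_c0_solid_hull (K : set (c0_weak R)) :
  compact K -> compact (c0_solid_hull K : set (c0_weak R)).
Proof.
move=> K_compact; rewrite compact_ultra => F F_ultra F_hull.
have F_proper := @ultra_proper _ _ F_ultra.
have /choice[G GP] (h : c0_weak R) : exists g : c0_weak R,
    c0_solid_hull K h -> K g /\ forall n, `|(h : c0 R) n| <= (g : c0 R) n.
  by have [[g Kg hg]|] := pselect (c0_solid_hull K h); [exists g | exists h].
have F_dom : \forall h \near F, forall n, `|(h : c0 R) n| <= (G h : c0 R) n.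
  by apply: (filterS _ F_hull) => h /GP[].
have GF_K : (G @ F) K by apply: (@filterS _ F _ (c0_solid_hull K)) => // h /GP[].
have [gs [Kgs /(ultra_cluster_cvg F_ultra) GFgs]] := K_compact (G @ F) _ GF_K.
have GF_coord k : (G h : c0 R) k @[h --> F] --> (gs : c0 R) k.
  exact: (cvg_comp _ _ GFgs (c0_dual_continuous (phi := c0_coord R k) (x := gs))).
have /choice[hs F_coord] k : exists c : R, (h : c0 R) k @[h --> F] --> c.
  apply: (ultra_cvg_bounded (M := (gs : c0 R) k + 1)) => //.
  move: F_dom (cvgr_dist_lt (FF := F_proper) _ _ (GF_coord k) _ ltr01).
  apply: filter_app2; apply: nearW.
  by move=> h /(_ k) h_dom; rewrite ltr_distlC => /andP[_ /ltW]; exact: le_trans.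
have hs_le k : `|hs k| <= (gs : c0 R) k.
  apply: ler_cvg_to (cvg_norm (F_coord k)) (GF_coord k) _.
  by apply: filterS F_dom => h /(_ k).
have hs0 : hs n @[n --> \oo] --> 0.
  by apply: dominated_cvg0 (c0_cvg gs) => n; exact: le_trans (hs_le n) (ler_norm _).
exists (mkc0 hs0); split; first by exists gs.
exact: (weak_cvg_dominated (hs := mkc0 hs0) F_proper GFgs F_dom F_coord).
Qed.

End c0_weak_compactness.

(** * Grothendieck sets *)

Lemma additive_bounded_continuous (R : realType) (E : normedModType R) (g : E -> R) (K : R) :
  0 <= K -> (forall x y, g (x + y) = g x + g y) -> (forall x, `|g x| <= K * `|x|) ->
  continuous g.
Proof.
move=> K_ge0 gD g_le x; apply/cvgrPdist_lt => e e_gt0.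
have e'_gt0 : 0 < e / (K + 1) by rewrite divr_gt0 // ltr_wpDl.
apply: filterS (cvgr_dist_lt _ _ (@cvg_id _ (nbhs x)) _ e'_gt0) => y xy /=.
rewrite -[X in g X](subrK y) gD addrK; apply: le_lt_trans (g_le _) _.
apply: le_lt_trans (ler_wpM2l K_ge0 (ltW xy)) _.
by rewrite mulrA ltr_pdivrMr ?ltr_wpDl //; nra.
Qed.

Lemma rel_weakly_compact_c0W (R : realType) (B : set (c0 R)) (K : set (c0_weak R)) :
  compact K -> (B : set (c0_weak R)) `<=` K -> rel_weakly_compact_c0 B.
Proof.
move=> K_compact BK.
apply: (@subclosed_compact (c0_weak R) _ K); [exact: closed_closure | exact: K_compact |].
rewrite [X in _ `<=` X](closure_id K).1; first exact: closureS.
exact: compact_closed (@c0_weak_hausdorff R) K_compact.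
Qed.

Lemma grothendieck_setS (R : realType) (E : completeNormedModType R) (A B : set E) :
  A `<=` B -> grothendieck_set B -> grothendieck_set A.
Proof.
move=> AB GB T T_bdd.
apply: (rel_weakly_compact_c0W (GB T T_bdd)).
by move=> _ [x Ax <-]; apply: subset_closure; exists x => //; exact: AB.
Qed.

Lemma lat_abs_sub_solid_hull (R : realType) (E : completeNormedModType R)
    (le : E -> E -> Prop) (join : E -> E -> E) (A : set E) :
  banach_lattice le join -> lat_abs join @` A `<=` solid_hull le join A.
Proof.
by move=> HBL _ [y Ay <-]; exists y => //; rewrite (lat_abs_id HBL); exact: (lle_refl HBL).
Qed.

Lemma c0_modulus_operator (R : realType) (E : completeNormedModType R)
    (le : E -> E -> Prop) (join : E -> E -> E) (T : E -> c0 R) :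
  banach_lattice le join -> dual_lattice_weakstar_seq_cont le join -> bounded_op_c0 T ->
  exists2 S : E -> c0 R, bounded_op_c0 S &
    forall x y, le (lat_abs join x) (lat_abs join y) ->
      forall n, `|T x n| <= S (lat_abs join y) n.
Proof.
move=> HBL Hdual [TD TZ [C TC]].
pose K := Num.max C 0; have K_ge0 : 0 <= K by rewrite le_max lexx orbT.
have fD n x y : T (x + y) n = T x n + T y n := TD x y n.
have fZ n (a : R) x : T (a *: x) n = a * T x n := TZ a x n.
have f_le n x : `|T x n| <= K * `|x|.
  apply: le_trans (c0norm_ge (T x) n) _; apply: le_trans (TC x) _.
  by apply: ler_wpM2r; rewrite ?normr_ge0 ?le_max ?lexx.
have f_dual n : dual_elem (fun x => T x n).
  by split=> //; exact: additive_bounded_continuous K_ge0 (fD n) (f_le n).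
have Tabs_cvg x := Hdual _ f_dual (fun x => c0_cvg (T x)) x.
exists (fun x => mkc0 (Tabs_cvg x)) => [|x y xy n /=]; last first.
  exact: (norm_le_dual_abs HBL (fD n) (fZ n) K_ge0 (f_le n) xy).
split=> [x y n | a x n | ] /=.
- exact: (dual_absD HBL (fD n) K_ge0 (f_le n) x y).
- exact: (dual_absZ HBL (fD n) (fZ n) K_ge0 (f_le n) a x).
- exists K => x; apply: c0norm_le => n /=.
  exact: (dual_abs_le_norm HBL (fZ n) K_ge0 (f_le n) x).
Qed.

Theorem mainTheorem11 (R : realType) (E : completeNormedModType R)
  (le : E -> E -> Prop) (join : E -> E -> E)
  (HBL : banach_lattice le join)
  (Hdual : dual_lattice_weakstar_seq_cont le join)
  (A : set E) :
  grothendieck_set (lat_abs join @` A) <-> grothendieck_set (solid_hull le join A).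
Proof.
split=> [G_absA T T_bdd|]; last exact: (grothendieck_setS (lat_abs_sub_solid_hull HBL)).
have [S S_bdd T_le] := c0_modulus_operator HBL Hdual T_bdd.
apply: rel_weakly_compact_c0W (compact_c0_solid_hull (G_absA S S_bdd)) _.
move=> _ [x [y Ay xy] <-]; exists (S (lat_abs join y)); last exact: T_le.
by apply: subset_closure; exists (lat_abs join y) => //; exists y.
Qed.
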